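(* For all positive integers $n$ and $k$, the number of entries equal to $k$ in row $a_1(n)$ of $T_1$ equals $\binom{n-1}{k-1}$.
   Context: For a positive integer $m$, the triangle $T_m$ is an array whose row $x$ ($x=1,2,\dots$) has $x$ entries, in columns $0,\dots,x-1$. Row $1$ is the single entry $1$. For $x>1$, row $x$ is obtained from row $x-1$ by rotating it cyclically left by $m$ positions (the entry in column $c$ of row $x-1$ moves to column $(c-m)\bmod(x-1)\in\{0,\dots,x-2\}$ of row $x$), then appending in column $x-1$ a new entry equal to $1$ plus the entry in column $0$ of row $x-1$. $T_m(x,c)$ denotes the entry in row $x$, column $c$, and $a_m(n)=\min\{x\in\mathbb{N}: T_m(x,x-1)=n\}$. Here $m=1$. The binomial coefficient $\binom{n-1}{k-1}$ is $0$ when $k-1>n-1$. *)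

From mathcomp Require Import all_boot.
Set Implicit Arguments. Unset Strict Implicit. Unset Printing Implicit Defensive.

(* trow m i is row (i+1) of the triangle T_m, as a sequence of its entries
   in columns 0, ..., i.  Row 1 is [:: 1]; row x (x > 1) is row x-1 rotated
   cyclically left by m positions (i.e. by m mod (x-1)), followed by
   1 + (entry in column 0 of row x-1). *)
Fixpoint trow (m i : nat) : seq nat :=
  match i with
  | 0 => [:: 1]
  | i'.+1 => let r := trow m i' in
             rcons (rot (m %% size r) r) (head 0 r).+1
  end.

Definition Trow (m x : nat) : seq nat := trow m x.-1.

Definition T (m x c : nat) : nat := nth 0 (Trow m x) c.

Definition is_a (m n x : nat) : Prop :=
  [/\ 0 < x, T m x x.-1 = n & forall y, 0 < y -> T m y y.-1 = n -> x <= y].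

From mathcomp Require Import all_boot zify.

(* Row x of T_1 lists the binary digit sums of x, x+1, ..., 2x-1: rotating
   [s(x), ..., s(2x-1)] left by one and appending 1 + s(x) = s(2x+1) gives
   [s(x+1), ..., s(2x-1), s(x), s(2x+1)], and s(x) = s(2x).  Hence the last
   entry of row y is s(2y-1), which reaches n first at y = 2^(n-1) because
   2^s(m) <= m+1; and row 2^(n-1) consists of the digit sums of the numbers
   with n binary digits, of which C(n-1, k-1) have digit sum k. *)

(* The recursion on [n./2] is fuelled by [n] itself, which suffices since
   [n./2 < n] for [n > 0]. *)
Fixpoint popcount_rec (fuel n : nat) : nat :=
  if fuel is fuel'.+1 then
    (if n is 0 then 0 else odd n + popcount_rec fuel' n./2)
  else 0.

Definition popcount (n : nat) : nat := popcount_rec n n.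

Lemma uphalf_leq_id n : uphalf n <= n.
Proof. by rewrite leq_uphalf_double -addnn leq_addl. Qed.

Lemma popcount_rec_fuel f1 f2 n :
  n <= f1 -> n <= f2 -> popcount_rec f1 n = popcount_rec f2 n.
Proof.
elim: f1 f2 n => [|f1 IH] [|f2] [|n] //= n_le_f1 n_le_f2.
by congr (_ + _); apply: IH; apply: leq_trans (uphalf_leq_id n) _.
Qed.

Lemma popcountE n : popcount n = odd n + popcount n./2.
Proof.
case: n => [//|n]; rewrite /popcount /=; congr (_ + _).
by apply: popcount_rec_fuel; rewrite // uphalf_leq_id.
Qed.

Lemma popcount_double n : popcount n.*2 = popcount n.
Proof. by rewrite popcountE odd_double doubleK. Qed.

Lemma popcount_doubleS n : popcount n.*2.+1 = (popcount n).+1.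
Proof. by rewrite popcountE /= odd_double uphalf_double. Qed.

Lemma popcount_pred_exp2 n : popcount (2 ^ n).-1 = n.
Proof.
elim: n => [//|n IH].
have -> : (2 ^ n.+1).-1 = ((2 ^ n).-1).*2.+1 by rewrite expnS; have := expn_gt0 2 n; lia.
by rewrite popcount_doubleS IH.
Qed.

Lemma binary_ind (P : nat -> Prop) :
  P 0 -> (forall n, P n -> P n.*2) -> (forall n, P n -> P n.*2.+1) ->
  forall n, P n.
Proof.
move=> P0 Peven Podd n; elim: n {-2}n (leqnn n) => [|N IH] n n_le_N.
  by move: n_le_N; rewrite leqn0 => /eqP ->.
rewrite -[n]odd_double_half.
have half_le_N : n./2 <= N.
  case: n n_le_N => [//|n]; rewrite ltnS => n_le_N.
  exact: leq_trans (uphalf_leq_id n) n_le_N.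
by case: (odd n); [apply: Podd | apply: Peven]; apply: IH.
Qed.

Lemma popcount_eq0 n : (popcount n == 0) = (n == 0).
Proof.
elim/binary_ind: n => [//|n IH|n _]; last by rewrite popcount_doubleS.
by rewrite popcount_double IH double_eq0.
Qed.

Lemma exp2_popcount_leq n : 2 ^ popcount n <= n.+1.
Proof.
elim/binary_ind: n => [//|n IH|n IH].
  by rewrite popcount_double (leq_trans IH) // ltnS -addnn leq_addl.
by rewrite popcount_doubleS expnS -doubleS -mul2n leq_mul2l.
Qed.

Lemma count_iota_double (P : pred nat) a N :
  count P (iota a.*2 N.*2) =
  count (fun j => P j.*2) (iota a N) + count (fun j => P j.*2.+1) (iota a N).
Proof. by elim: N a => [|N IH] a //=; rewrite -doubleS IH; lia. Qed.

Lemma count_popcount_exp2 j k :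
  count (fun m => popcount m == k.+1) (iota (2 ^ j) (2 ^ j)) = 'C(j, k).
Proof.
elim: j k => [|j IH] k; first by case: k.
rewrite expnS mul2n count_iota_double.
under eq_count do rewrite popcount_double.
under [X in _ + X]eq_count do rewrite popcount_doubleS eqSS.
rewrite IH; case: k => [|k]; last by rewrite binS IH addnC.
rewrite !bin0 -[RHS]addn0; congr (_ + _); apply/eqP.
rewrite eqn0Ngt -has_count; apply/hasPn => m.
by rewrite mem_iota popcount_eq0 -lt0n => /andP[/(leq_trans (expn_gt0 2 j))].
Qed.

Lemma trow1E i : trow 1 i = [seq popcount m | m <- iota i.+1 i.+1].
Proof.
elim: i => [//|i IH].
rewrite -[X in iota _ X]addn2 iotaD /= IH size_map size_iota /=.
have -> : rot (1 %% i.+1) (popcount i.+1 :: [seq popcount m | m <- iota i.+2 i])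
        = rcons [seq popcount m | m <- iota i.+2 i] (popcount i.+1).
  by case: i {IH} => [//|i]; rewrite modn_small // rot1_cons.
rewrite map_cat /= -!cats1 -catA; congr (_ ++ _).
have -> : i.+2 + i = i.+1.*2 by rewrite -addnn addSnnS.
by rewrite popcount_double popcount_doubleS.
Qed.

Lemma Trow1E x : 0 < x -> Trow 1 x = [seq popcount m | m <- iota x x].
Proof. by move=> x_gt0; rewrite /Trow trow1E prednK. Qed.

Lemma T1_last x : 0 < x -> T 1 x x.-1 = popcount (x + x.-1).
Proof.
move=> x_gt0; have pred_lt : x.-1 < x by rewrite prednK.
by rewrite /T Trow1E // (nth_map 0) ?size_iota ?nth_iota.
Qed.

Lemma is_a1_exp2 n : is_a 1 n.+1 (2 ^ n).
Proof.
have exp2_gt0 := expn_gt0 2 n; split=> //.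
  rewrite T1_last // -[n.+1 in RHS]popcount_pred_exp2 expnS; congr popcount; lia.
move=> y y_gt0; rewrite T1_last // => last_eq.
by have := exp2_popcount_leq (y + y.-1); rewrite last_eq expnS; lia.
Qed.

Theorem mainTheorem16 (n k : nat) : 0 < n -> 0 < k ->
  exists x, is_a 1 n x /\ count_mem k (Trow 1 x) = 'C(n.-1, k.-1).
Proof.
case: n => [//|n] _; case: k => [//|k] _ /=.
exists (2 ^ n); split; first exact: is_a1_exp2.
rewrite Trow1E ?expn_gt0 // count_map -(count_popcount_exp2 n k).
by apply: eq_count => m; rewrite /= eq_sym.
Qed.
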